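(* Let $\mathcal{F}=\{f_i\}_{i=1}^N$ be a frame for $\mathbb{R}^n$ of length $N$ which has the exact PR-redundancy property and satisfies $d(\mathcal{F})<n$. Then $N<n(n+1)/2$.
   Context: A frame for $\mathbb{R}^n$ is a finite spanning sequence; $\mathcal{F}_\Lambda=\{f_i\}_{i\in\Lambda}$ for $\Lambda\subseteq\{1,\dots,N\}$. Let $\mathcal{S}_2$ be the set of real symmetric $n\times n$ matrices of rank at most $2$ and $\Theta_{L(\mathcal{F}_\Lambda)}(A)=(f_i^TAf_i)_{i\in\Lambda}$. $\mathcal{F}$ has the exact PR-redundancy property if $\ker(\Theta_{L(\mathcal{F}_\Lambda)})\cap\mathcal{S}_2\neq\ker(\Theta_{L(\mathcal{F})})\cap\mathcal{S}_2$ for every proper subset $\Lambda$. With $\Lambda^c$ the complement, $d_\Lambda=\max\{\dim\mathrm{span}(\mathcal{F}_\Lambda),\dim\mathrm{span}(\mathcal{F}_{\Lambda^c})\}$ and $d(\mathcal{F})=\min_{\Lambda\subseteq\{1,\dots,N\}}d_\Lambda$. *)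

From mathcomp Require Import all_boot all_order all_algebra.
From mathcomp Require Import reals.
Set Implicit Arguments. Unset Strict Implicit. Unset Printing Implicit Defensive.
Import Order.TTheory GRing.Theory Num.Theory.
Local Open Scope ring_scope.

Section Frames.
Variables (R : realType) (n N : nat).
Implicit Types (f : 'I_N -> 'rV[R]_n) (L : {set 'I_N}) (A : 'M[R]_n).

Definition is_frame f : Prop := ((1%:M : 'M[R]_n) <= (\big[addsmx/0]_(i < N) <<f i>>%MS))%MS.

Definition span_dim f L : nat := \rank (\big[addsmx/0]_(i in L) <<f i>>%MS).

Definition S2 A : Prop := A^T = A /\ (\rank A <= 2)%N.

(* Theta_{L(F_L)}(A) = (f_i^T A f_i)_{i in L}, coordinates outside L padded by 0
   (so its kernel is exactly the kernel of the map into R^L); f_i is a row vector here,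
   so f_i^T A f_i is the 1x1 matrix f i *m A *m (f i)^T *)
Definition Theta f L A : {ffun 'I_N -> R} :=
  [ffun i => if i \in L then (f i *m A *m (f i)^T) 0 0 else 0].

Definition kerS2 f L : 'M[R]_n -> Prop :=
  fun A => Theta f L A = 0 /\ S2 A.

Definition exact_PR_redundancy f : Prop :=
  forall L : {set 'I_N}, L \proper [set: 'I_N] -> kerS2 f L <> kerS2 f [set: 'I_N].

Definition d_Lam f L : nat := maxn (span_dim f L) (span_dim f (~: L)).

(* d(F) = min_L d_L ; every d_L <= n, so the neutral element n of the
   iterated minn is harmless (the index set of L's is nonempty anyway). *)
Definition d_frame f : nat := \big[minn/n]_(L : {set 'I_N}) d_Lam f L.

End Frames.

From mathcomp Require Import all_boot all_order all_algebra.
From mathcomp Require Import boolp reals ring.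
(* Coordinatize the symmetric n x n matrices by their entries on the pairs
   i <= j, a space of dimension n(n+1)/2, and let theta_mx be the matrix of
   A |-> (f_i A f_i^T)_i in these coordinates.  Exact PR-redundancy gives, for
   each j, a symmetric A that vanishes on every f_i but f_j, so the image of
   theta_mx is all of R^N and its rank is N.  A set L with both span(F_L) and
   span(F_{L^c}) proper gives nonzero u orthogonal to F_L and v orthogonal to
   F_{L^c}; every f_i kills the nonzero symmetric matrix u^T v + v^T u, so
   theta_mx has a nontrivial kernel and rank < n(n+1)/2. *)

Set Implicit Arguments. Unset Strict Implicit. Unset Printing Implicit Defensive.
Import Order.TTheory GRing.Theory Num.Theory.

Definition upper_pairs n : {set 'I_n * 'I_n} := [set p : 'I_n * 'I_n | p.1 <= p.2].

Lemma card_upper_pairs n : #|upper_pairs n| = (n * n.+1) %/ 2.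
Proof.
rewrite divn2 mulnC -bin2 -bin2_sum big_nat_recl // big_mkord.
rewrite -sum1dep_card (eq_bigl (fun p : 'I_n * 'I_n => xpredT p.1 && (p.1 <= p.2))) //.
rewrite -(pair_big_dep xpredT (fun a b : 'I_n => a <= b) (fun _ _ => 1)).
rewrite (exchange_big_dep xpredT) //=; apply: eq_bigr => b _.
rewrite (eq_bigl (fun i : 'I_n => xpredT i && (i < b.+1))) //.
by rewrite -(big_ord_widen_cond _ xpredT (fun _ => 1) (ltn_ord b)) sum1_card card_ord.
Qed.

Local Open Scope ring_scope.

Section QuadraticForms.
Variables (R : fieldType) (n : nat).
Implicit Types (u v w : 'rV[R]_n) (A : 'M[R]_n).

Definition quad w A : R := (w *m A *m w^T) 0 0.

Lemma quad_sum w (I : finType) (c : I -> R) (B : I -> 'M[R]_n) :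
  quad w (\sum_k c k *: B k) = \sum_k c k * quad w (B k).
Proof.
rewrite /quad mulmx_sumr mulmx_suml summxE; apply: eq_bigr => k _.
by rewrite -scalemxAr -scalemxAl mxE.
Qed.

Lemma sym_outer_tr u v : (u^T *m v + v^T *m u)^T = u^T *m v + v^T *m u.
Proof. by rewrite raddfD /= !trmx_mul !trmxK addrC. Qed.

Lemma quad_sym_outer w u v :
  quad w (u^T *m v + v^T *m u) = 2%:R * (w *m u^T) 0 0 * (w *m v^T) 0 0.
Proof.
have dotC (a b : 'rV[R]_n) : (b *m a^T) 0 0 = (a *m b^T) 0 0.
  by rewrite -[a *m _]trmxK trmx_mul trmxK [RHS]mxE.
have outer (a b : 'rV[R]_n) :
    (w *m (a^T *m b) *m w^T) 0 0 = (w *m a^T) 0 0 * (w *m b^T) 0 0.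
  by rewrite mulmxA -mulmxA mxE big_ord1; congr (_ * _); apply: dotC.
by rewrite /quad mulmxDr mulmxDl mxE !outer; ring.
Qed.

Lemma quad_sym_outer_eq0 w u v :
  w *m u^T = 0 \/ w *m v^T = 0 -> quad w (u^T *m v + v^T *m u) = 0.
Proof. by rewrite quad_sym_outer => -[] ->; rewrite !mxE ?mulr0 ?mul0r. Qed.

Lemma ortho_of_rank_lt m (S : 'M[R]_(m, n)) :
  (\rank S < n)%N -> exists2 u : 'rV[R]_n, u != 0 & S *m u^T = 0.
Proof.
move=> ltSn; exists (nz_row (kermx S^T)).
  by rewrite nz_row_eq0 -mxrank_eq0 mxrank_ker mxrank_tr subn_eq0 -ltnNge.
apply: trmx_inj; rewrite trmx_mul trmxK trmx0.
by apply/sub_kermxP; apply: submx_trans (nz_row_sub _) _.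
Qed.

Definition sym_delta_mx (p : 'I_n * 'I_n) : 'M[R]_n :=
  delta_mx p.1 p.2 + delta_mx p.2 p.1.

Definition sym_of (x : 'rV[R]_#|upper_pairs n|) : 'M[R]_n :=
  \sum_k x 0 k *: sym_delta_mx (enum_val k).

Lemma sym_of0 : sym_of 0 = 0.
Proof. by rewrite /sym_of big1 // => k _; rewrite mxE scale0r. Qed.

Hypothesis two_neq0 : 2%:R != 0 :> R.

Lemma sym_of_surj A : A^T = A -> exists x, sym_of x = A.
Proof.
move=> symA.
pose U := \matrix_(i, j)
  if (i < j)%N then A i j else if i == j then A i i / 2%:R else 0.
have U_upper p : p \notin upper_pairs n -> U p.1 p.2 = 0.
  rewrite inE -ltnNge mxE => lt21.
  by rewrite ltnNge (ltnW lt21) -(inj_eq val_inj) gtn_eqF.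
have U_sym : U + U^T = A.
  apply/matrixP => i j; rewrite !mxE -!(inj_eq val_inj) /=.
  case: ltngtP => [_|_|/val_inj ->]; rewrite ?addr0 ?add0r //.
  - by rewrite -[in LHS]symA mxE.
  - by rewrite -mulrDl -mulr2n -(mulr_natr (A j j)) mulfK.
exists (\row_k U (enum_val k).1 (enum_val k).2); rewrite -U_sym.
have -> : sym_of (\row_k U (enum_val k).1 (enum_val k).2) =
           \sum_p U p.1 p.2 *: sym_delta_mx p.
  rewrite (bigID (mem (upper_pairs n))) /= [X in _ + X]big1 => [|p /U_upper ->].
    by rewrite addr0 big_enum_val; apply: eq_bigr => k _; rewrite mxE.
  exact: scale0r.
rewrite [U in RHS]matrix_sum_delta pair_bigA linear_sum -big_split /=.
by apply: eq_bigr => p _; rewrite linearZ /= trmx_delta scalerDr.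
Qed.

Lemma sym_outer_neq0 u v : u != 0 -> v != 0 -> u^T *m v + v^T *m u != 0.
Proof.
move=> u_neq0 v_neq0; apply/eqP => uv0.
have uv_entry a b : u 0 a * v 0 b + v 0 a * u 0 b = 0.
  by have := congr1 (fun M : 'M[R]_n => M a b) uv0; rewrite !mxE !big_ord1 !mxE.
have [a ua_neq0] : exists a, u 0 a != 0.
  apply/existsP; apply: contraNT u_neq0 => /existsPn u0.
  by apply/eqP/rowP => a; rewrite mxE; apply/eqP/negPn/u0.
have va0 : v 0 a = 0.
  move/eqP: (uv_entry a a); rewrite mulrC -mulr2n -mulr_natl !mulf_eq0.
  by rewrite (negbTE two_neq0) (negbTE ua_neq0) orbF => /eqP.
move/eqP: v_neq0; apply; apply/rowP => b; rewrite mxE.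
move/eqP: (uv_entry a b); rewrite va0 mul0r addr0 mulf_eq0 (negbTE ua_neq0).
by move/eqP.
Qed.

Variables (N : nat) (f : 'I_N -> 'rV[R]_n).

Definition theta_mx : 'M[R]_(#|upper_pairs n|, N) :=
  \matrix_(k, i) quad (f i) (sym_delta_mx (enum_val k)).

Lemma theta_mxE x i : (x *m theta_mx) 0 i = quad (f i) (sym_of x).
Proof. by rewrite mxE /sym_of quad_sum; apply: eq_bigr => k _; rewrite mxE. Qed.

Lemma theta_rank_lt A :
  A^T = A -> A != 0 -> (forall i, quad (f i) A = 0) ->
  (\rank theta_mx < #|upper_pairs n|)%N.
Proof.
move=> symA A_neq0 fA0; have [x xA] := sym_of_surj symA.
have x_neq0 : x != 0 by apply: contraNneq A_neq0 => x0; rewrite -xA x0 sym_of0.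
have xM0 : x *m theta_mx = 0 by apply/rowP => i; rewrite theta_mxE xA fA0 mxE.
rewrite ltn_neqAle rank_leq_row andbT; apply: contraNN x_neq0 => free.
by rewrite -(mulmx_free_eq0 _ free) xM0.
Qed.

Lemma theta_row_full :
  (forall j, exists2 A, A^T = A & forall i, (quad (f i) A == 0) = (i != j)) ->
  row_full theta_mx.
Proof.
move=> separating; rewrite -sub1mx; apply/row_subP => j; rewrite row1.
have [A symA fA] := separating j; have [x xA] := sym_of_surj symA.
have fjA_neq0 : quad (f j) A != 0 by rewrite fA eqxx.
suff -> : 'e_j = (quad (f j) A)^-1 *: (x *m theta_mx).
  by rewrite scalemx_sub ?submxMl.
apply/rowP => i; rewrite [RHS]mxE theta_mxE xA !mxE eqxx /=.
have [->|ne_ij] := eqVneq i j; first by rewrite mulVf.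
by move: ne_ij; rewrite -fA => /eqP ->; rewrite mulr0.
Qed.

End QuadraticForms.

Section Frames.
Variables (R : realType) (n N : nat) (f : 'I_N -> 'rV[R]_n).

Lemma span_dim_lt_ortho L :
  (span_dim f L < n)%N ->
  exists2 u : 'rV[R]_n, u != 0 & forall i, i \in L -> f i *m u^T = 0.
Proof.
move=> /ortho_of_rank_lt[u u_neq0 Su0]; exists u => // i iL.
have /submxP[w ->] : (f i <= \big[addsmx/0]_(i in L) <<f i>>)%MS.
  by rewrite (sumsmx_sup i) // genmxE.
by rewrite -mulmxA Su0 mulmx0.
Qed.

Lemma d_frame_lt_split :
  (d_frame f < n)%N -> exists L, (span_dim f L < n)%N /\ (span_dim f (~: L) < n)%N.
Proof.
move=> /(elimT (bigmin_ltP n xpredT n (d_Lam f))) [|[L _]]; first by rewrite ltxx.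
by move=> lt_dL_n; exists L; apply/andP; rewrite -gtn_max.
Qed.

Lemma exact_PR_redundancy_separating :
  exact_PR_redundancy f ->
  forall j, exists2 A, A^T = A & forall i, (quad (f i) A == 0) = (i != j).
Proof.
move=> PR j; have := PR _ (properD1 (in_setT j)); apply: contra_notP => no_sep.
apply/funext => A; apply/propext; split => [[ThA S2A]|[ThA S2A]]; split => //.
- have fA0 i : i != j -> quad (f i) A = 0.
    move=> ne_ij; have := congr1 (fun g : {ffun 'I_N -> R} => g i) ThA.
    by rewrite !ffunE !inE ne_ij.
  have fjA0 : quad (f j) A = 0.
    apply/eqP/negPn/negP => fjA_neq0; apply: no_sep; exists A => [|i]; first by case: S2A.
    by have [->|ne_ij] := eqVneq i j; [rewrite (negbTE fjA_neq0) | rewrite fA0 ?eqxx].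
  apply/ffunP => i; rewrite !ffunE in_setT.
  by have [->|ne_ij] := eqVneq i j; [exact: fjA0 | exact: fA0].
- apply/ffunP => i; have := congr1 (fun g : {ffun 'I_N -> R} => g i) ThA.
  by rewrite !ffunE in_setT => ->; case: ifP.
Qed.

End Frames.

Theorem proposition3p8 (R : realType) (n N : nat) (f : 'I_N -> 'rV[R]_n) :
  is_frame f -> exact_PR_redundancy f -> (d_frame f < n)%N ->
  (N < (n * n.+1) %/ 2)%N.
Proof.
move=> _ PR lt_d_n.
have two_neq0 : 2%:R != 0 :> R by rewrite pnatr_eq0.
have [L [ltL ltLc]] := d_frame_lt_split lt_d_n.
have [u u_neq0 fLu] := span_dim_lt_ortho ltL.
have [v v_neq0 fLcv] := span_dim_lt_ortho ltLc.
have /eqP <- := theta_row_full two_neq0 (exact_PR_redundancy_separating PR).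
rewrite -card_upper_pairs.
apply: (theta_rank_lt two_neq0 (sym_outer_tr u v)); first exact: sym_outer_neq0.
move=> i; apply: quad_sym_outer_eq0.
have [iL|iLc] := boolP (i \in L).
  by left; apply: fLu.
by right; apply: fLcv; rewrite inE.
Qed.
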